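(* The variety of Boolean algebras (equivalently, classical propositional logic, with formulas identified up to logical equivalence) has unitary e-generalization type.
   Context: For a variety $\mathsf V$: a symbolic e-generalization problem is a finite multiset $\{t_1,\dots,t_m\}$ of terms (elements of a free algebra $\mathbf F_{\mathsf V}(X)$, $X$ finite, i.e. terms up to the equational theory of $\mathsf V$); a solution is a term $s\in\mathbf F_{\mathsf V}(Y)$ ($Y$ the variables of $s$) such that there are substitutions (homomorphisms between free algebras) $\sigma_k$ with $\sigma_k(s)=t_k$ for all $k$; $s\preceq u$ iff $\sigma(u)=s$ for some substitution $\sigma$. A problem has unitary type if its poset of solutions modulo $\preceq$-equivalence has a minimal complete set (pairwise incomparable elements such that every solution lies above one of them) of cardinality 1, i.e. a least general solution exists. A variety has unitary e-generalization type if every such problem has unitary type. For a logic, e-generalization is taken with respect to logical equivalence of formulas, which for classical logic is the equational theory of Boolean algebras. *)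

From mathcomp Require Import all_boot.
Set Implicit Arguments. Unset Strict Implicit. Unset Printing Implicit Defensive.

Inductive form (n : nat) : Type :=
  | FVar of 'I_n
  | FTop
  | FBot
  | FNeg of form n
  | FAnd of form n & form n
  | FOr of form n & form n.

Arguments FTop {n}. Arguments FBot {n}.

Fixpoint feval n (v : 'I_n -> bool) (f : form n) : bool :=
  match f with
  | FVar i => v i
  | FTop => true
  | FBot => false
  | FNeg g => ~~ feval v g
  | FAnd g h => feval v g && feval v h
  | FOr g h => feval v g || feval v h
  end.

(* Logical equivalence = equality in the free Boolean algebra F(I_n). *)
Definition fequiv n (f g : form n) : Prop := forall v : 'I_n -> bool, feval v f = feval v g.

(* Substitution: the homomorphism F(I_m) -> F(I_n) determined by the images of
   the variables. *)
Fixpoint fsubst m n (sigma : 'I_m -> form n) (f : form m) : form n :=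
  match f with
  | FVar i => sigma i
  | FTop => FTop
  | FBot => FBot
  | FNeg g => FNeg (fsubst sigma g)
  | FAnd g h => FAnd (fsubst sigma g) (fsubst sigma h)
  | FOr g h => FOr (fsubst sigma g) (fsubst sigma h)
  end.

(* s is a solution of the symbolic e-generalization problem ts (a finite
   multiset of terms over I_n, given as a list): every t_k is an instance of s. *)
Definition egen_solution n (ts : seq (form n)) m (s : form m) : Prop :=
  forall k, (k < size ts)%N -> exists sigma : 'I_m -> form n, fequiv (fsubst sigma s) (nth FBot ts k).

Definition less_general m (s : form m) m' (u : form m') : Prop :=
  exists sigma : 'I_m' -> form m, fequiv (fsubst sigma u) s.

(* Unitary type: there is a minimal complete set of solutions of cardinality 1,
   i.e. a solution s lying below every solution. *)
Definition unitary_problem n (ts : seq (form n)) : Prop :=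
  exists m (s : form m), egen_solution ts s /\
    forall m' (u : form m'), egen_solution ts u -> less_general s u.

(* Write the problem as {t_1, ..., t_K} over the variables x_1, ..., x_n and
   add fresh guard variables y_1, ..., y_K. The least general solution is
   the case split
     s = if y_1 then t_1 else if y_2 then t_2 else ... else t_K.
   Setting y_k to true and the other guards to false shows that t_k is an
   instance of s. Conversely, let u be a solution with sigma_k(u) = t_k. The
   substitution sending each variable z of u to the case split of the
   sigma_k(z) maps u to s: under a fixed valuation the guards pick the same
   branch k in every one of these case splits, so u is evaluated as
   sigma_k(u) = t_k, which is also what s evaluates to. *)
From mathcomp Require Import all_boot.
Set Implicit Arguments. Unset Strict Implicit. Unset Printing Implicit Defensive.

Lemma eq_feval n (v1 v2 : 'I_n -> bool) : v1 =1 v2 -> feval v1 =1 feval v2.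
Proof. by move=> eq_v; elim=> //= [g -> | g -> h -> | g -> h ->]. Qed.

Lemma feval_fsubst m n (sigma : 'I_m -> form n) v f :
  feval v (fsubst sigma f) = feval (fun i => feval v (sigma i)) f.
Proof. by elim: f => //= [g -> | g -> h -> | g -> h ->]. Qed.

Definition fite n (c f g : form n) : form n := FOr (FAnd c f) (FAnd (FNeg c) g).

Lemma feval_fite n v (c f g : form n) :
  feval v (fite c f g) = if feval v c then feval v f else feval v g.
Proof. by rewrite /=; case: (feval v c); rewrite ?orbF. Qed.

(* The last branch is taken unconditionally, so guard (size bs).-1 is never
   consulted. *)
Fixpoint fcases n (guard : nat -> form n) (bs : seq (form n)) : form n :=
  match bs with
  | [::] => FBot
  | [:: b] => b
  | b :: bs' => fite (guard 0) b (fcases (guard \o succn) bs')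
  end.

Lemma fcases_select n (guard : nat -> form n) v bs k :
  k < size bs -> (forall i, i < size bs -> feval v (guard i) = (i == k)) ->
  feval v (fcases guard bs) = feval v (nth FBot bs k).
Proof.
elim: bs guard k => [//|b [|b' bs] IHbs] guard k lt_k guardE.
  by case: k lt_k guardE.
rewrite [fcases _ _]/= feval_fite (guardE 0 isT).
case: k => [|k] in lt_k guardE *; first by [].
by apply: IHbs => // i lt_i; rewrite /= (guardE i.+1).
Qed.

Lemma fcases_pick n (guard : nat -> form n) v K : 0 < K ->
  exists2 k, k < K &
    forall bs, size bs = K -> feval v (fcases guard bs) = feval v (nth FBot bs k).
Proof.
elim: K guard => [//|[|K] IHK] guard _.
  by exists 0 => // -[|b [|]].
case guard0: (feval v (guard 0)).
  by exists 0 => // -[|b [|b' bs]] // _; rewrite [fcases _ _]/= feval_fite guard0.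
have [k lt_k IHk] := IHK (guard \o succn) isT.
exists k.+1 => // -[|b [|b' bs]] // [size_bs].
rewrite [fcases _ _]/= feval_fite guard0.
by apply: (IHk (b' :: bs)); rewrite /= size_bs.
Qed.

Section LeastGeneralSolution.

Variables (n : nat) (ts : seq (form n)).
Local Notation K := (size ts).

(* The variables of the least general solution are 'I_(n + K): the first n
   are those of the t_k, the last K are the guards y_1, ..., y_K. *)
Definition lift_term (t : form n) : form (n + K) :=
  fsubst (fun i => FVar (lshift K i)) t.

Definition case_guard (j : nat) : form (n + K) :=
  if insub j is Some k then FVar (rshift n k) else FBot.

Definition lgg : form (n + K) := fcases case_guard (map lift_term ts).

Lemma feval_lift_term v t : feval v (lift_term t) = feval (fun i => v (lshift K i)) t.
Proof. exact: feval_fsubst. Qed.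

Definition select_subst (k : nat) (i : 'I_(n + K)) : form n :=
  match split i with
  | inl x => FVar x
  | inr y => if val y == k then FTop else FBot
  end.

Lemma lgg_select k : k < K -> fequiv (fsubst (select_subst k) lgg) (nth FBot ts k).
Proof.
move=> lt_k v; rewrite feval_fsubst (fcases_select (k := k)) ?size_map //.
  rewrite (nth_map FBot) // feval_lift_term; apply: eq_feval => x.
  by rewrite /select_subst (unsplitK (inl _ x)).
move=> i lt_i; rewrite /case_guard insubT /=.
by rewrite /select_subst (unsplitK (inr _ (Ordinal lt_i))) /=; case: (i == k).
Qed.

Lemma lgg_solution : egen_solution ts lgg.
Proof. by move=> k lt_k; exists (select_subst k); apply: lgg_select. Qed.

Lemma lgg_least m (u : form m) (sigma : 'I_K -> 'I_m -> form n) :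
    0 < K -> (forall k : 'I_K, fequiv (fsubst (sigma k) u) (nth FBot ts k)) ->
  less_general lgg u.
Proof.
move=> K_gt0 sigmaE.
exists (fun z => fcases case_guard [seq lift_term (sigma k z) | k <- enum 'I_K]) => v.
have [k lt_k branchE] := fcases_pick case_guard v K_gt0.
pose k' := Ordinal lt_k.
have branch_lift_sigma z :
    feval v (fcases case_guard [seq lift_term (sigma k z) | k <- enum 'I_K])
    = feval v (lift_term (sigma k' z)).
  rewrite branchE; last by rewrite size_map size_enum_ord.
  by rewrite (nth_map k') ?size_enum_ord // [nth _ _ k](nth_ord_enum k' k').
rewrite feval_fsubst (eq_feval branch_lift_sigma) /lgg branchE ?size_map //.
rewrite (nth_map FBot) // feval_lift_term -(sigmaE k') feval_fsubst.
by apply: eq_feval => z; rewrite feval_lift_term.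
Qed.

End LeastGeneralSolution.

Theorem theorem5p1 :
  forall (n : nat) (ts : seq (form n)), ts <> [::] -> unitary_problem ts.
Proof.
move=> n ts ts_neq0; have size_gt0 : 0 < size ts by case: ts ts_neq0.
exists (n + size ts), (lgg ts); split; first exact: lgg_solution.
move=> m u u_solution.
have [sigma sigmaE] := fin_all_exists (fun k : 'I_(size ts) => u_solution k (ltn_ord k)).
exact: lgg_least size_gt0 sigmaE.
Qed.
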